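(* Let $q$ be a prime power, $2\le k\le n$, and let $\mathcal{C} \subseteq \mathbb{F}_q^n$ be a linear code of dimension $k$. Then $$\mathbb{E}[\mathcal{C}] = nH_n - \sum_{s=k}^{n-1} \frac{\alpha(\mathcal{C},s)}{\binom{n-1}{s}}.$$
   Context: $H_m = \sum_{i=1}^m 1/i$ is the $m$-th harmonic number ($H_0=0$). For a linear code $\mathcal{C}\subseteq\mathbb{F}_q^n$ of dimension $k$, $\mathbb{E}[\mathcal{C}]$ is $\mathbb{E}[G]$ for any generator matrix $G\in\mathbb{F}_q^{k\times n}$ of $\mathcal{C}$, where $\mathbb{E}[G]$ is the expected number of draws when columns of $G$ are drawn independently and uniformly at random from its $n$ columns (with repetition) until the drawn columns span $\mathbb{F}_q^k$; this does not depend on $G$. Writing $g_j$ for the $j$-th column of a generator matrix $G$ of $\mathcal{C}$, for $0\le s\le n$ let $\alpha(\mathcal{C},s) = |\{S\subseteq\{1,\dots,n\} : |S|=s,\ \langle g_j : j\in S\rangle = \mathbb{F}_q^k\}|$, the number of information sets of $\mathcal{C}$ of size $s$ (independent of the choice of $G$). *)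

From HB Require Import structures.
From mathcomp Require Import all_boot all_order all_algebra.
From mathcomp Require Import all_classical all_reals.
From mathcomp Require Import ereal sequences.
Set Implicit Arguments. Unset Strict Implicit. Unset Printing Implicit Defensive.
Import Order.TTheory GRing.Theory Num.Theory.
Local Open Scope ring_scope.

(* G : 'M[F]_(k, n) is a generator matrix; its j-th column is col j G,
   i.e. the row vector row j G^T in F^k. *)

Definition spans (F : fieldType) (k n : nat) (G : 'M[F]_(k, n)) (S : {set 'I_n}) : bool :=
  row_full (\sum_(j in S) <<row j G^T>>)%MS.

Definition alpha (F : finFieldType) (k n : nat) (G : 'M[F]_(k, n)) (s : nat) : nat :=
  #|[set S : {set 'I_n} | (#|S| == s) && spans G S]|.

(* Number of sequences of t draws (uniform, with repetition, from the n columns)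
   for which the stopping time equals t: the t drawn columns span F^k but the
   first t-1 do not. *)
Definition stop_count (F : finFieldType) (k n : nat) (G : 'M[F]_(k, n)) (t : nat) : nat :=
  #|[set x : t.-tuple 'I_n |
       spans G [set j | j \in (x : seq 'I_n)]
       && ~~ spans G [set j | j \in take t.-1 (x : seq 'I_n)]]|.

Definition prob_stop (R : realType) (F : finFieldType) (k n : nat) (G : 'M[F]_(k, n))
  (t : nat) : R := (stop_count G t)%:R / (n%:R ^+ t).

Definition expected_draws (R : realType) (F : finFieldType) (k n : nat)
  (G : 'M[F]_(k, n)) : \bar R :=
  (\sum_(t <oo) ((t%:R * prob_stop R G t)%:E))%E.

Definition harmonic_number (R : realType) (m : nat) : R := \sum_(i < m) (i.+1%:R)^-1.

From HB Require Import structures.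
From mathcomp Require Import all_boot all_order all_algebra.
From mathcomp Require Import all_classical all_reals.
From mathcomp Require Import ereal sequences topology normedtype.
From mathcomp Require Import ring lra.
Import Order.TTheory GRing.Theory Num.Theory.
Set Implicit Arguments. Unset Strict Implicit. Unset Printing Implicit Defensive.

(* Let T be the number of draws. Summing by parts, E[T] = sum_t P(T > t), and
   n^t P(T > t) counts the length-t draw sequences whose columns do not span.
   Group these by the set S of drawn columns.  Conditioning on the last draw,
   the series L_S = sum_t #{length-t sequences with set exactly S} / n^t
   satisfies (1 - |S|/n) L_S = [S = set0] + (1/n) sum_(j in S) L_(S :\ j),
   which is solved by L_S = 1 / 'C(n-1, |S|).  So E[T] is the sum of
   1 / 'C(n-1, |S|) over the non-spanning S.  Over all S of size s < n this
   sum is 'C(n, s) / 'C(n-1, s) = n / (n - s), giving n H_n, while the spanning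
   S of size s are counted by alpha(C, s). *)

Lemma setU1_eq (T : finType) (j : T) (A S : {set T}) : j \in S ->
  (j |: A == S) = (A == S) || (A == S :\ j).
Proof.
move=> jS; apply/eqP/orP => [<-|[/eqP-> | /eqP->]]; last 2 first.
- by apply/finset.setUidPr; rewrite finset.sub1set.
- exact: finset.setD1K.
have [jA|jA] := boolP (j \in A); [left | right].
  by rewrite (finset.setUidPr _) // finset.sub1set.
by rewrite finset.setU1K.
Qed.

Section DrawSequences.
Variable n : nat.

Definition tuple_set t (x : t.-tuple 'I_n) : {set 'I_n} := [set j | j \in (x : seq 'I_n)].

Lemma tuple_set0 (x : 0.-tuple 'I_n) : tuple_set x = finset.set0.
Proof. by rewrite (tuple0 x); apply/setP => i; rewrite !inE. Qed.

Lemma tuple_set_rcons t (y : t.-tuple 'I_n) j : tuple_set (rcons_tuple y j) = j |: tuple_set y.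
Proof. by apply/setP => i; rewrite !inE /= mem_rcons inE. Qed.

Lemma take_rcons_tuple t (y : t.-tuple 'I_n) j : take t (rcons_tuple y j) = y.
Proof. by rewrite /= -cats1 take_size_cat // size_tuple. Qed.

Lemma rcons_tuple_bij t : bijective (fun p : t.-tuple 'I_n * 'I_n => rcons_tuple p.1 p.2).
Proof.
apply: inj_card_bij; last by rewrite card_prod !card_tuple card_ord expnSr.
move=> [y1 j1] [y2 j2] /(congr1 val) /= eq_rcons.
have ej : j1 = j2 by move: (congr1 (last j1) eq_rcons); rewrite !last_rcons.
by subst j2; congr pair; apply: val_inj; exact: rcons_injl eq_rcons.
Qed.

Lemma card_rcons_tuple t (P : pred (t.+1.-tuple 'I_n)) :
  #|[set x | P x]| = \sum_(j : 'I_n) #|[set y : t.-tuple 'I_n | P (rcons_tuple y j)]|.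
Proof.
rewrite -sum1dep_card big_mkcond /= (reindex _ (onW_bij _ (rcons_tuple_bij t))) /=.
rewrite -(pair_bigA _ (fun y j => if P (rcons_tuple y j) then 1 else 0)) exchange_big /=.
by apply: eq_bigr => j _; rewrite -sum1dep_card [RHS]big_mkcond.
Qed.

Lemma card_tuples_sub (S : {set 'I_n}) t :
  #|[set x : t.-tuple 'I_n | tuple_set x \subset S]| = #|S| ^ t.
Proof.
elim: t => [|t IH].
  rewrite expn0 -[RHS](card_tuple 0 'I_n); apply: eq_card => x.
  by rewrite !inE tuple_set0 finset.sub0set.
rewrite card_rcons_tuple expnS -IH -sum1_card big_distrl /= (bigID (mem S)) /=.
rewrite addnC big1 => [|j jS].
  rewrite add0n; apply: eq_bigr => j jS; rewrite mul1n; apply: eq_card => y.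
  by rewrite !inE tuple_set_rcons finset.subUset finset.sub1set jS.
apply/eqP; rewrite cards_eq0; apply/eqP/setP => y.
by rewrite !inE tuple_set_rcons finset.subUset finset.sub1set (negbTE jS).
Qed.

Definition exact_count (S : {set 'I_n}) t := #|[set x : t.-tuple 'I_n | tuple_set x == S]|.

Lemma exact_count_le S t : exact_count S t <= #|S| ^ t.
Proof.
rewrite -card_tuples_sub; apply: subset_leq_card; apply/fintype.subsetP => x.
by rewrite !inE => /eqP->.
Qed.

Lemma exact_count0 S : exact_count S 0 = (S == finset.set0).
Proof.
rewrite /exact_count (eq_card (B := [set x : 0.-tuple 'I_n | finset.set0 == S])); last first.
  by move=> x; rewrite !inE tuple_set0.
by rewrite eq_sym; case: eqP => _; rewrite ?cards0 // finset.cardsT card_tuple.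
Qed.

Lemma exact_count_rec S t :
  exact_count S t.+1 = #|S| * exact_count S t + \sum_(j in S) exact_count (S :\ j) t.
Proof.
rewrite /exact_count card_rcons_tuple -sum1_card big_distrl -big_split /=.
rewrite (bigID (mem S)) /= [X in _ + X]big1 ?addn0 => [|j jS]; last first.
  apply/eqP; rewrite cards_eq0; apply/eqP/setP => y; rewrite !inE tuple_set_rcons.
  by apply/negbTE; apply: contra jS => /eqP <-; rewrite !inE eqxx.
apply: eq_bigr => j jS; rewrite mul1n.
rewrite (eq_card (B := [set y | tuple_set y == S] :|: [set y | tuple_set y == S :\ j])); last first.
  by move=> y; rewrite !inE tuple_set_rcons (setU1_eq _ jS).
rewrite cardsU; set I := (_ :&: _); suff -> : I = finset.set0 by rewrite cards0 subn0.
apply/setP => y; rewrite !inE; apply/negbTE/andP => -[/eqP-> /eqP/setP/(_ j)].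
by rewrite !inE eqxx jS.
Qed.

End DrawSequences.

Section Spanning.
Variables (F : fieldType) (k n : nat) (G : 'M[F]_(k, n)).

Lemma spans_leq_card S : spans G S -> k <= #|S|.
Proof.
rewrite /spans /row_full => /eqP <-; rewrite -sum1_card.
apply: (big_ind2 (fun (A : 'M[F]_k) m => \rank A <= m)) => [|A1 m1 A2 m2 le1 le2|j _].
- by rewrite mxrank0.
- exact: leq_trans (mxrank_adds_leqif _ _) (leq_add le1 le2).
- by rewrite genmxE rank_leq_row.
Qed.

Lemma spansS (S T : {set 'I_n}) : S \subset T -> spans G S -> spans G T.
Proof.
move=> sST; rewrite /spans /row_full => /eqP fullS.
rewrite eqn_leq rank_leq_col -{1}fullS; apply: mxrankS.
apply/sumsmx_subP => j jS; apply: (sumsmx_sup j) => //.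
exact: (fintype.subsetP sST).
Qed.

Lemma spans_setT : \rank G = k -> spans G finset.setT.
Proof.
move=> rankG; rewrite /spans /row_full eqn_leq rank_leq_col.
rewrite -{1}rankG -mxrank_tr; apply: mxrankS; apply/row_subP => j.
by rewrite (sumsmx_sup j) ?inE // genmxE.
Qed.

Lemma nonspanning_card_lt S : \rank G = k -> ~~ spans G S -> #|S| < n.
Proof.
move=> rankG; apply: contraR; rewrite -leqNgt => le_n_S.
suff -> : S = finset.setT by exact: spans_setT.
by apply/eqP; rewrite eqEcard finset.subsetT finset.cardsT card_ord.
Qed.

End Spanning.

Section StoppingTime.
Variables (F : finFieldType) (k n : nat) (G : 'M[F]_(k, n)).

Definition nonspan_count t := #|[set x : t.-tuple 'I_n | ~~ spans G (tuple_set x)]|.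

Lemma stop_count_rec t : stop_count G t.+1 + nonspan_count t.+1 = n * nonspan_count t.
Proof.
rewrite /stop_count /nonspan_count !card_rcons_tuple -big_split.
rewrite -[n in n * _]card_ord -sum_nat_const; apply: eq_bigr => j _.
rewrite -(cardsID [set y | spans G (j |: tuple_set y)] [set y | ~~ spans G (tuple_set y)]).
congr (_ + _); apply: eq_card => y; rewrite !inE -/(tuple_set _) tuple_set_rcons.
  by rewrite take_rcons_tuple andbC.
by rewrite andb_idr //; apply: contra; apply: spansS; rewrite finset.subsetUr.
Qed.

Lemma nonspan_count_sum t :
  nonspan_count t = \sum_(S : {set 'I_n} | ~~ spans G S) exact_count S t.
Proof.
rewrite /nonspan_count -sum1dep_card (partition_big (@tuple_set n t) (fun S => ~~ spans G S)) //=.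
apply: eq_bigr => S nS; rewrite sum1dep_card; apply: eq_card => x; rewrite !inE.
by apply: andb_idl => /eqP ->.
Qed.

End StoppingTime.

Import numFieldNormedType.Exports.
Local Open Scope classical_set_scope.
Local Open Scope ring_scope.

Lemma natr_mul_expr_le (R : realFieldType) (c : R) M :
  0 <= c -> c < 1 -> M%:R * c ^+ M <= (1 - c)^-1.
Proof.
move=> c_ge0 c_lt1; have c1_gt0 : 0 < 1 - c by rewrite subr_gt0.
have geometric_sum : \sum_(t < M) c ^+ t = (1 - c ^+ M) / (1 - c).
  by rewrite -opprB subrX1 -mulNr opprB mulrAC divff ?mul1r // gt_eqF.
apply: (@le_trans _ _ (\sum_(t < M) c ^+ t)).
  rewrite mulr_natl -[M in _ *+ M]card_ord -sumr_const; apply: ler_sum => t _.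
  exact: ler_wiXn2l c_ge0 (ltW c_lt1) _ _ (ltnW (ltn_ord t)).
by rewrite geometric_sum -[X in _ <= X]mul1r ler_pM2r ?invr_gt0 // gerBl exprn_ge0.
Qed.

Lemma cvg_natr_mul_expr0 (R : realType) (r : R) :
  0 <= r -> r < 1 -> (fun M : nat => M%:R * r ^+ M) @ \oo --> 0.
Proof.
move=> r_ge0 r_lt1; set s := (1 + r) / 2.
have s_ge0 : 0 <= s by rewrite /s; lra.
have s_lt1 : s < 1 by rewrite /s; lra.
have r_le_s2 : r <= s ^+ 2 by rewrite /s; nra.
apply: (@squeeze_cvgr _ _ _ _ (fun _ => 0) (fun M => s ^+ M * (1 - s)^-1)).
- near=> M; rewrite mulr_ge0 ?exprn_ge0 //=.
  apply: (@le_trans _ _ (M%:R * (s ^+ M * s ^+ M))).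
    rewrite ler_wpM2l // -expr2 -exprM mulnC exprM; apply: lerXn2r => //.
    by rewrite nnegrE exprn_ge0.
  by rewrite mulrCA ler_wpM2l ?exprn_ge0 // natr_mul_expr_le.
- exact: cvg_cst.
- rewrite -(mul0r (1 - s)^-1); apply: cvgMl; apply: cvg_expr.
  by rewrite ger0_norm.
Unshelve. all: by end_near.
Qed.

Section Visits.
Variables (R : realType) (n : nat).
Hypothesis n_gt0 : (0 < n)%N.

Definition inv_binom (s : nat) : R := ('C(n.-1, s)%:R)^-1.

Let n_neq0 : n%:R != 0 :> R.
Proof. by rewrite pnatr_eq0 -lt0n. Qed.

Lemma inv_binom_rec s : (s < n)%N ->
  inv_binom s = ((s == 0)%:R + n%:R^-1 * (s%:R * inv_binom s.-1)) / (1 - s%:R / n%:R).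
Proof.
case: s => [_|s lt_s_n]; first by rewrite /inv_binom bin0 !mul0r mulr0 addr0 subr0 divr1 invr1.
have lt_s_n1 : (s < n.-1)%N by rewrite -ltnS prednK.
have C_neq0 : 'C(n.-1, s)%:R != 0 :> R by rewrite pnatr_eq0 -lt0n bin_gt0 ltnW.
have ns_neq0 : n%:R - s.+1%:R != 0 :> R by rewrite subr_eq0 eqr_nat neq_ltn lt_s_n orbT.
have s_neq0 : s.+1%:R != 0 :> R by rewrite pnatr_eq0.
have binE : 'C(n.-1, s.+1)%:R = (n%:R - s.+1%:R) * 'C(n.-1, s)%:R / s.+1%:R :> R.
  apply: (canRL (mulfK s_neq0)); rewrite mulrC -natrB 1?ltnW // -!natrM mul_bin_left.
  by rewrite subnS -!subn1 subnAC.
rewrite /inv_binom binE /= add0r; move: n_neq0 ns_neq0 C_neq0 s_neq0.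
move: (n%:R : R) (s.+1%:R : R) ('C(n.-1, s)%:R : R) => a b c a_neq0 ab_neq0 c_neq0 b_neq0.
by field; rewrite a_neq0 ab_neq0 c_neq0 b_neq0.
Qed.

Definition visits (S : {set 'I_n}) (M : nat) : R :=
  \sum_(t < M) (exact_count S t)%:R / n%:R ^+ t.

Lemma exact_term_ge0 (S : {set 'I_n}) t : 0 <= (exact_count S t)%:R / n%:R ^+ t :> R.
Proof. by rewrite divr_ge0 ?exprn_ge0. Qed.

Lemma exact_term_le (S : {set 'I_n}) t :
  (exact_count S t)%:R / n%:R ^+ t <= (#|S|%:R / n%:R) ^+ t :> R.
Proof.
rewrite expr_div_n ler_pM2r ?invr_gt0 ?exprn_gt0 ?ltr0n // -natrX ler_nat.
exact: exact_count_le.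
Qed.

Lemma visits_rec (S : {set 'I_n}) M : visits S M.+1 = (S == finset.set0)%:R
  + n%:R^-1 * (#|S|%:R * visits S M + \sum_(j in S) visits (S :\ j) M).
Proof.
rewrite /visits big_ord_recl /= exact_count0 expr0 divr1; congr (_ + _).
rewrite mulr_sumr exchange_big -big_split mulr_sumr /=; apply: eq_bigr => t _.
rewrite /bump /= add1n exact_count_rec natrD natrM natr_sum -mulr_suml exprS.
have : n%:R ^+ t != 0 :> R by rewrite expf_neq0.
move: n_neq0; move: (n%:R : R) (n%:R ^+ t : R) => a b a_neq0 b_neq0.
by field; rewrite a_neq0 b_neq0.
Qed.

Lemma visits_fixpoint (S : {set 'I_n}) : (#|S| < n)%N -> visits S = fun M =>
  ((S == finset.set0)%:R + n%:R^-1 * \sum_(j in S) visits (S :\ j) M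
   - (visits S M.+1 - visits S M)) / (1 - #|S|%:R / n%:R).
Proof.
move=> lt_S_n; apply: funext => M; have nS_neq0 : n%:R - #|S|%:R != 0 :> R.
  by rewrite subr_eq0 eqr_nat neq_ltn lt_S_n orbT.
rewrite visits_rec; move: n_neq0 nS_neq0.
move: (n%:R : R) (visits S M) (#|S|%:R : R) (\sum_(j in S) visits (S :\ j) M).
move: ((S == finset.set0)%:R : R) => b a x c y a_neq0 ac_neq0.
by field; rewrite a_neq0 ac_neq0.
Qed.

Lemma cvg_visits_step (S : {set 'I_n}) :
  (#|S| < n)%N -> (fun M => visits S M.+1 - visits S M) @ \oo --> 0.
Proof.
move=> lt_S_n; apply: (@squeeze_cvgr _ _ _ _ (fun _ => 0) (fun M => (#|S|%:R / n%:R) ^+ M)).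
- near=> M; rewrite /visits big_ord_recr /= addrAC subrr add0r.
  by rewrite exact_term_ge0 exact_term_le.
- exact: cvg_cst.
- apply: cvg_expr; rewrite ger0_norm ?divr_ge0 //.
  by rewrite ltr_pdivrMr ?ltr0n // mul1r ltr_nat.
Unshelve. all: by end_near.
Qed.

Lemma cvg_visits (S : {set 'I_n}) : (#|S| < n)%N -> visits S @ \oo --> inv_binom #|S|.
Proof.
have [m] := ubnP #|S|; elim: m S => // m IH S /ltnSE le_S_m lt_S_n.
rewrite (visits_fixpoint lt_S_n).
have -> : inv_binom #|S| = ((S == finset.set0)%:R
    + n%:R^-1 * \sum_(j in S) inv_binom #|S|.-1 - 0) / (1 - #|S|%:R / n%:R).
  by rewrite (inv_binom_rec lt_S_n) cards_eq0 sumr_const mulr_natl subr0.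
apply: cvgMl; apply: cvgB; last exact: cvg_visits_step.
apply: cvgD; first exact: cvg_cst.
apply: cvgMr; apply: (@cvg_big _ _ +%R 0 _ add_continuous) => // j jS.
have cardSj : #|S| = #|S :\ j|.+1 by rewrite (cardsD1 j S) jS.
by rewrite cardSj /=; apply: IH; rewrite -ltnS -cardSj // ltnW.
Qed.

End Visits.

Section Expectation.
Variables (R : realType) (F : finFieldType) (k n : nat) (G : 'M[F]_(k, n)).
Hypotheses (n_gt0 : (0 < n)%N) (rankG : \rank G = k).

Definition tail_prob t : R := (nonspan_count G t)%:R / n%:R ^+ t.

Lemma tail_prob_sum t : tail_prob t =
  \sum_(S : {set 'I_n} | ~~ spans G S) (exact_count S t)%:R / n%:R ^+ t.
Proof. by rewrite /tail_prob nonspan_count_sum natr_sum mulr_suml. Qed.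

Lemma prob_stop_succ t : prob_stop R G t.+1 = tail_prob t - tail_prob t.+1.
Proof.
have /(congr1 (fun m => m%:R : R)) := stop_count_rec G t; rewrite natrD natrM.
move/(canRL (addrK _)) => stopE; rewrite /prob_stop stopE /tail_prob exprS.
have : n%:R ^+ t != 0 :> R by rewrite expf_neq0 // pnatr_eq0 -lt0n.
have : n%:R != 0 :> R by rewrite pnatr_eq0 -lt0n.
move: (n%:R : R) (n%:R ^+ t : R) (_%:R : R) (_%:R : R) => a b c d a_neq0 b_neq0.
by field; rewrite a_neq0 b_neq0.
Qed.

Lemma partial_mean M : \sum_(t < M.+1) t%:R * prob_stop R G t =
  \sum_(t < M) tail_prob t - M%:R * tail_prob M.
Proof.
elim: M => [|M IH]; first by rewrite big_ord1 big_ord0 !mul0r subr0.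
by rewrite big_ord_recr /= IH prob_stop_succ big_ord_recr /= -addn1 natrD; ring.
Qed.

Lemma cvg_tail_series : (fun M => \sum_(t < M) tail_prob t) @ \oo -->
  \sum_(S : {set 'I_n} | ~~ spans G S) inv_binom R n #|S|.
Proof.
have -> : (fun M => \sum_(t < M) tail_prob t) =
    fun M => \sum_(S : {set 'I_n} | ~~ spans G S) visits R S M.
  apply: funext => M; rewrite /visits exchange_big /=.
  by apply: eq_bigr => t _; exact: tail_prob_sum.
apply: (@cvg_big _ _ +%R 0 _ add_continuous) => // S nS.
by apply: cvg_visits => //; exact: nonspanning_card_lt rankG nS.
Qed.

Lemma cvg_natr_mul_tail0 : (fun M : nat => M%:R * tail_prob M) @ \oo --> 0.
Proof.
have -> : (fun M : nat => M%:R * tail_prob M) = fun M =>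
    \sum_(S : {set 'I_n} | ~~ spans G S) M%:R * ((exact_count S M)%:R / n%:R ^+ M).
  by apply: funext => M; rewrite tail_prob_sum mulr_sumr.
rewrite [X in _ --> X](_ : 0 = \sum_(S : {set 'I_n} | ~~ spans G S) 0); last by rewrite big1_eq.
apply: (@cvg_big _ _ +%R 0 _ add_continuous) => // S nS.
have lt_S_n := nonspanning_card_lt rankG nS.
apply: (@squeeze_cvgr _ _ _ _ (fun _ => 0) (fun M => M%:R * (#|S|%:R / n%:R) ^+ M)).
- by near=> M; rewrite mulr_ge0 ?exact_term_ge0 ?ler_wpM2l ?exact_term_le.
- exact: cvg_cst.
- apply: cvg_natr_mul_expr0; first by rewrite divr_ge0.
  by rewrite ltr_pdivrMr ?ltr0n // mul1r ltr_nat.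
Unshelve. all: by end_near.
Qed.

Lemma expected_draws_nonspanning :
  expected_draws R G = (\sum_(S : {set 'I_n} | ~~ spans G S) inv_binom R n #|S|)%:E.
Proof.
have cvg_mean : (fun M => \sum_(0 <= t < M) t%:R * prob_stop R G t) @ \oo -->
    \sum_(S : {set 'I_n} | ~~ spans G S) inv_binom R n #|S|.
  rewrite -cvg_shiftS.
  have -> : (fun M => \sum_(0 <= t < M.+1) t%:R * prob_stop R G t) =
      fun M => \sum_(t < M) tail_prob t - M%:R * tail_prob M.
    by apply: funext => M; rewrite big_mkord partial_mean.
  have := cvgB cvg_tail_series cvg_natr_mul_tail0; rewrite subr0.
  by apply; exact: filter_on_Filter.
rewrite /expected_draws.
have -> : (fun M => (\sum_(0 <= t < M) (t%:R * prob_stop R G t)%:E)%E) =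
    EFin \o (fun M => \sum_(0 <= t < M) t%:R * prob_stop R G t).
  by apply: funext => M; rewrite /= sumEFin.
by rewrite EFin_lim ?(cvg_lim _ cvg_mean) //; exact: cvgP cvg_mean.
Qed.

End Expectation.

Local Close Scope classical_set_scope.

Section BinomialSums.
Variables (R : realType) (n : nat).
Hypothesis n_gt0 : (0 < n)%N.

Lemma sum_by_card (Q : pred {set 'I_n}) (f : nat -> R) :
  \sum_(S : {set 'I_n} | Q S) f #|S| =
  \sum_(0 <= s < n.+1) #|[set S : {set 'I_n} | (#|S| == s) && Q S]|%:R * f s.
Proof.
rewrite big_mkord (partition_big (fun S : {set 'I_n} => inord #|S| : 'I_n.+1) xpredT) //=.
apply: eq_bigr => s _; have card_lt (S : {set 'I_n}) : (#|S| < n.+1)%N.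
  by rewrite ltnS (leq_trans (max_card _)) ?card_ord.
rewrite (eq_bigr (fun _ => f s)) => [|S /andP[_ /eqP <-]]; last by rewrite inordK.
rewrite sumr_const mulr_natl; congr (_ *+ _); apply: eq_card => S.
by rewrite !inE unfold_in /= -val_eqE /= inordK // andbC.
Qed.

Lemma inv_binom_n : inv_binom R n n = 0.
Proof. by rewrite /inv_binom bin_small ?invr0 // prednK. Qed.

Lemma binom_inv_binom m : (m < n)%N -> 'C(n, m)%:R * inv_binom R n m = n%:R / (n - m)%:R.
Proof.
move=> lt_m_n; have C_neq0 : 'C(n.-1, m)%:R != 0 :> R.
  by rewrite pnatr_eq0 -lt0n bin_gt0 -ltnS prednK.
have nm_neq0 : (n - m)%:R != 0 :> R by rewrite pnatr_eq0 subn_eq0 -ltnNge.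
apply: (canRL (mulfK nm_neq0)); rewrite /inv_binom mulrAC -natrM mulnC -mul_bin_down natrM.
by rewrite mulfK.
Qed.

Lemma sum_inv_binom : \sum_(S : {set 'I_n}) inv_binom R n #|S| = n%:R * harmonic_number R n.
Proof.
rewrite (sum_by_card xpredT) big_nat_recr //= inv_binom_n mulr0 addr0 big_mkord.
rewrite /harmonic_number mulr_sumr (reindex_inj rev_ord_inj) /=; apply: eq_bigr => s _.
rewrite (eq_card (B := [set S : {set 'I_n} | #|S| == (n - s.+1)%N])) => [|S]; last first.
  by rewrite !inE andbT.
rewrite card_draws card_ord binom_inv_binom ?subKn //.
by rewrite -subSn // subSS leq_subr.
Qed.

Lemma sum_inv_binom_spans (F : finFieldType) k (G : 'M[F]_(k, n)) : (k <= n)%N ->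
  \sum_(S : {set 'I_n} | spans G S) inv_binom R n #|S| =
  \sum_(k <= s < n) (alpha G s)%:R / ('C(n.-1, s))%:R.
Proof.
move=> le_k_n; rewrite sum_by_card big_nat_recr //= inv_binom_n mulr0 addr0.
rewrite (big_cat_nat (leq0n k) le_k_n) /= big_nat_cond big1 ?add0r.
  by apply: eq_bigr.
move=> s /andP[/andP[_ lt_s_k] _].
suff -> : #|[set S : {set 'I_n} | (#|S| == s) && spans G S]| = 0%N by rewrite mul0r.
apply/eqP; rewrite cards_eq0; apply/eqP/setP => S; rewrite !inE.
by apply/negbTE/andP => -[/eqP cardS /spans_leq_card]; rewrite cardS leqNgt lt_s_k.
Qed.

End BinomialSums.

Theorem mainTheorem3 (R : realType) (F : finFieldType) (k n : nat)
  (G : 'M[F]_(k, n)) (hk : (2 <= k)%N) (hkn : (k <= n)%N) (hG : \rank G = k) :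
  expected_draws R G =
  (n%:R * harmonic_number R n
     - \sum_(k <= s < n) (alpha G s)%:R / ('C(n.-1, s))%:R)%:E.
Proof.
have n_gt0 : (0 < n)%N by apply: leq_trans hkn; exact: leq_trans hk.
rewrite (expected_draws_nonspanning R n_gt0 hG) -(sum_inv_binom R n_gt0).
rewrite -(sum_inv_binom_spans R n_gt0 G hkn).
by rewrite [X in _ = (X - _)%:E](bigID (spans G)) /= addrAC subrr add0r.
Qed.
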